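(* Let $P$ and $Q$ be finite posets. If $P$ and $Q$ are both mCDE, then the direct product $P\times Q$ is mCDE.
   Context: All posets are finite. $\mathbb{E}(\mu;f)=\sum_p f(p)\mathbb{P}(\mu;p)$. $\mathrm{ddeg}(p)$ is the number of elements covered by $p$; $\mathrm{uni}$ is the uniform distribution. A $k$-chain is $c_0<\cdots<c_k$; $\mathrm{chain}(k)$ gives $p$ probability $\#\{k\text{-chains }c\ni p\}/((k+1)\#\{k\text{-chains}\})$. If $r$ is the length of a longest chain in a poset $R$, $R$ is mCDE if $\mathbb{E}(\mathrm{chain}(k)_R;\mathrm{ddeg})=\mathbb{E}(\mathrm{uni}_R;\mathrm{ddeg})$ for all $k=0,\ldots,r$. $P\times Q$ has $(p,q)\le(p',q')$ iff $p\le_P p'$ and $q\le_Q q'$. *)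

From HB Require Import structures.
From mathcomp Require Import all_boot all_order all_algebra.
Set Implicit Arguments. Unset Strict Implicit. Unset Printing Implicit Defensive.
Import Order.Theory GRing.Theory Num.Theory.

Section MCDE.
Context {d : Order.disp_t} (T : finPOrderType d).
Local Open Scope order_scope.

Definition covers (p q : T) : bool :=
  (q < p) && [forall z : T, ~~ ((q < z) && (z < p))].

Definition ddeg (p : T) : nat := #|[set q : T | covers p q]|.

(* a k-chain c_0 < c_1 < ... < c_k, as a (k+1)-tuple *)
Definition is_chain (k : nat) (c : k.+1.-tuple T) : bool := sorted <%O (val c).

Definition nchains (k : nat) : nat := #|[set c : k.+1.-tuple T | is_chain c]|.

Definition nchains_at (k : nat) (p : T) : nat :=
  #|[set c : k.+1.-tuple T | is_chain c && (p \in val c)]|.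

Definition poset_height : nat :=
  (\max_(k < #|T|) (if 0 < nchains k then val k else 0))%N.

Local Open Scope ring_scope.

Definition uni (p : T) : rat := #|T|%:R^-1.

Definition chain_dist (k : nat) (p : T) : rat :=
  (nchains_at k p)%:R / ((k.+1)%:R * (nchains k)%:R).

Definition expect (mu : T -> rat) (f : T -> nat) : rat :=
  \sum_(p : T) (f p)%:R * mu p.

Definition mCDE : Prop :=
  forall k : nat, (k <= poset_height)%N ->
    expect (chain_dist k) ddeg = expect uni ddeg.

End MCDE.

(* Let g = ddeg - (mean of ddeg).  Then T is mCDE iff, for every k, the sum over all
   k-chains of the g-weights of their elements vanishes: beyond the height there are
   no k-chains at all.  Summing instead over the multichains y_0 <= ... <= y_n gives a
   binomial transform of these chain sums which is triangular with unit diagonal, so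
   T is mCDE iff all these multichain sums vanish.  A multichain of P x Q is a pair of
   multichains, and an element covered by (p, q) agrees with it in one coordinate, so
   that g(p, q) = g(p) + g(q); hence each multichain sum of P x Q is a combination of
   those of P and of Q. *)

From HB Require Import structures.
From mathcomp Require Import all_boot all_order all_algebra.
From mathcomp Require Import ring.
Import Order.Theory GRing.Theory Num.Theory.
Set Implicit Arguments. Unset Strict Implicit. Unset Printing Implicit Defensive.
Local Open Scope ring_scope.

Lemma big_tuple_cons (R : Type) (idx : R) (op : Monoid.com_law idx)
    (T : finType) n (F : n.+1.-tuple T -> R) :
  \big[op/idx]_(c : n.+1.-tuple T) F c =
  \big[op/idx]_(x : T) \big[op/idx]_(t : n.-tuple T) F [tuple of x :: t].
Proof.
rewrite pair_bigA /=.
rewrite (reindex (fun p : T * n.-tuple T => [tuple of p.1 :: p.2])) //=.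
exists (fun c : n.+1.-tuple T => (thead c, behead_tuple c)).
  by move=> [x t] _ /=; rewrite theadE; congr pair; apply: val_inj.
by move=> c _; case/tupleP: c => x t; apply: val_inj.
Qed.

Lemma sum_binS (V : nmodType) (F : nat -> V) n :
  \sum_(j < n.+2) F j *+ 'C(n.+1, j) =
  \sum_(j < n.+1) (F j + F j.+1) *+ 'C(n, j).
Proof.
rewrite big_ord_recl bin0 mulr1n.
under eq_bigr => i _ do rewrite lift0 binS mulrnDr.
under [RHS]eq_bigr do rewrite mulrnDl.
rewrite !big_split /= addrA; congr (_ + _).
rewrite [RHS]big_ord_recl bin0 mulr1n; congr (_ + _).
rewrite big_ord_recr /= bin_small // mulr0n addr0.
by apply: eq_bigr => i _; rewrite /bump add1n.
Qed.

Lemma sum_binS_shift (V : nmodType) (F : nat -> V) n :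
  \sum_(j < n.+2) F j *+ 'C(n.+2, j.+1) =
  F 0%N + \sum_(j < n.+1) (F j + F j.+1) *+ 'C(n.+1, j.+1).
Proof.
pose G j := if j is j'.+1 then F j' else 0.
transitivity (\sum_(j < n.+3) G j *+ 'C(n.+2, j)).
  by rewrite [RHS]big_ord_recl /G /= mul0rn add0r; apply: eq_bigr => i _; rewrite /bump add1n.
by rewrite (sum_binS G) big_ord_recl /G /= add0r bin0 mulr1n.
Qed.

Section Chains.
Context {d : Order.disp_t} (T : finPOrderType d).

Lemma is_chain_cons k x (t : k.+1.-tuple T) :
  is_chain [tuple of x :: t] = (x < thead t)%O && is_chain t.
Proof. by case/tupleP: t. Qed.

Lemma big_chain_head (R : Type) (idx : R) (op : Monoid.com_law idx) k z
    (F : k.+2.-tuple T -> R) :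
  \big[op/idx]_(c : k.+2.-tuple T | is_chain c && (thead c == z)) F c =
  \big[op/idx]_(y | (z < y)%O)
     \big[op/idx]_(t : k.+1.-tuple T | is_chain t && (thead t == y))
       F [tuple of z :: t].
Proof.
rewrite big_mkcond big_tuple_cons (bigD1 z) //= [X in op _ X]big1 => [|x /negbTE xz].
  rewrite Monoid.mulm1 -big_mkcond /=.
  rewrite (eq_bigl (fun t => (z < thead t)%O && is_chain t)) => [|t]; last first.
    by rewrite is_chain_cons theadE eqxx andbT.
  rewrite (partition_big (@thead _ _) (fun y => (z < y)%O)) => [|t /andP[] //].
  apply: eq_bigr => y zy; apply: eq_bigl => t.
  by case: (thead t =P y) => [->|]; rewrite ?zy ?andbF.
by apply: big1 => t _; rewrite theadE xz andbF.
Qed.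

Definition nchains_from k (z : T) : nat :=
  #|[set c : k.+1.-tuple T | is_chain c & thead c == z]|.

Lemma is_chain1 z (c : 1.-tuple T) : is_chain c && (thead c == z) = (c == [tuple z]).
Proof.
case/tupleP: c => x t; rewrite tuple0 theadE /is_chain /=.
by apply/eqP/eqP => [->|[]] //; apply: val_inj.
Qed.

Lemma nchains_from0 z : nchains_from 0 z = 1.
Proof.
by apply/eqP/cards1P; exists [tuple z]; apply/setP => c; rewrite !inE is_chain1.
Qed.

Lemma nchains_fromS k z : nchains_from k.+1 z = \sum_(y | (z < y)%O) nchains_from k y.
Proof.
rewrite /nchains_from -sum1dep_card big_chain_head.
by apply: eq_bigr => y _; rewrite sum1dep_card.
Qed.

Lemma sum_ge_lt (V : nmodType) (F : T -> V) z :
  \sum_(y | (z <= y)%O) F y = F z + \sum_(y | (z < y)%O) F y.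
Proof.
rewrite (bigD1 z) //=; congr (_ + _); apply: eq_bigl => y.
by rewrite lt_def andbC eq_sym.
Qed.

Fixpoint nmultichains_from n (z : T) : nat :=
  if n is n'.+1 then (\sum_(y | (z <= y)%O) nmultichains_from n' y)%R else 1.

Lemma nmultichains_fromS n z :
  nmultichains_from n.+1 z = \sum_(y | (z <= y)%O) nmultichains_from n y.
Proof. by []. Qed.

Lemma nmultichains_from_binomial n z :
  nmultichains_from n z = \sum_(j < n.+1) nchains_from j z *+ 'C(n, j).
Proof.
elim: n z => [|n IHn] z; first by rewrite big_ord1 nchains_from0.
rewrite nmultichains_fromS (sum_binS (fun j => nchains_from j z)).
under [RHS]eq_bigr do rewrite mulrnDl.
rewrite big_split /= -IHn sum_ge_lt; congr (_ + _).
rewrite (eq_bigr _ (fun y _ => IHn y)) exchange_big /=; apply: eq_bigr => j _.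
by rewrite nchains_fromS sumrMnl.
Qed.

Section Weights.
Variables (R : nmodType) (w : T -> R).

Definition chain_weight_from k z : R :=
  \sum_(c : k.+1.-tuple T | is_chain c && (thead c == z)) \sum_(x <- c) w x.

Definition chain_sum k : R :=
  \sum_(c : k.+1.-tuple T | is_chain c) \sum_(x <- c) w x.

Lemma chain_weight_from0 z : chain_weight_from 0 z = w z.
Proof.
by rewrite /chain_weight_from (big_pred1 [tuple z]) ?big_seq1 // => c; rewrite is_chain1.
Qed.

Lemma chain_weight_fromS k z :
  chain_weight_from k.+1 z =
  w z *+ nchains_from k.+1 z + \sum_(y | (z < y)%O) chain_weight_from k y.
Proof.
rewrite /chain_weight_from big_chain_head nchains_fromS -sumrMnr -big_split /=.
apply: eq_bigr => y _; under eq_bigr do rewrite big_cons.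
rewrite big_split /= /nchains_from -sum1dep_card -sumrMnr.
by congr (_ + _); apply: eq_bigr => t _; rewrite mulr1n.
Qed.

Lemma chain_sum_from k : chain_sum k = \sum_z chain_weight_from k z.
Proof. by rewrite /chain_sum (partition_big (@thead _ _) xpredT). Qed.

Fixpoint multichain_weight_from n z : R :=
  if n is n'.+1 then
    w z *+ nmultichains_from n z + \sum_(y | (z <= y)%O) multichain_weight_from n' y
  else w z.

Lemma multichain_weight_fromS n z :
  multichain_weight_from n.+1 z =
  w z *+ nmultichains_from n.+1 z + \sum_(y | (z <= y)%O) multichain_weight_from n y.
Proof. by []. Qed.

Definition multichain_sum n : R := \sum_z multichain_weight_from n z.

(* The multichains of length n+1 with a given j-chain c as set of values are counted
   by 'C(n, j), and together their entries weigh 'C(n+1, j+1) times the weight of c. *)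
Lemma multichain_weight_from_binomial n z :
  multichain_weight_from n z = \sum_(j < n.+1) chain_weight_from j z *+ 'C(n.+1, j.+1).
Proof.
elim: n z => [|n IHn] z; first by rewrite big_ord1 chain_weight_from0.
rewrite multichain_weight_fromS (sum_binS_shift (fun j => chain_weight_from j z)).
rewrite chain_weight_from0 nmultichains_from_binomial big_ord_recl.
rewrite nchains_from0 bin0 mulr1n mulrnDr -sumrMnr.
rewrite sum_ge_lt IHn mulr1n -addrA; congr (_ + _).
under [X in _ + (_ + X)]eq_bigr do rewrite IHn.
rewrite exchange_big /= -!big_split; apply: eq_bigr => j _ /=.
rewrite sumrMnl /bump add1n chain_weight_fromS -mulr_natr natn mulrnA !mulrnDl.
by rewrite addrCA.
Qed.

Lemma multichain_sum_binomial n :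
  multichain_sum n = \sum_(j < n.+1) chain_sum j *+ 'C(n.+1, j.+1).
Proof.
rewrite /multichain_sum; under eq_bigr do rewrite multichain_weight_from_binomial.
by rewrite exchange_big; apply: eq_bigr => j _; rewrite chain_sum_from sumrMnl.
Qed.

Lemma multichain_sums_eq0 :
  (forall n, multichain_sum n = 0) <-> (forall k, chain_sum k = 0).
Proof.
split=> [multi0 k | chain0 n]; last first.
  by rewrite multichain_sum_binomial big1 // => j _; rewrite chain0 mul0rn.
elim/ltn_ind: k => k IHk; have := multi0 k.
rewrite multichain_sum_binomial big_ord_recr /= binn mulr1n.
by rewrite big1 ?add0r // => j _; rewrite IHk ?mul0rn.
Qed.

End Weights.

Lemma chain_sum_const (V : nmodType) k (a : V) :
  chain_sum (fun _ => a) k = a *+ (k.+1 * nchains T k)%N.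
Proof.
rewrite /chain_sum mulrnA -sumr_const; apply: eq_big => [c|c _]; first by rewrite inE.
by rewrite big_tuple sumr_const card_ord.
Qed.

Lemma chain_sumB (V : zmodType) (w : T -> V) k a :
  chain_sum (fun x => w x - a) k = chain_sum w k - a *+ (k.+1 * nchains T k)%N.
Proof.
rewrite -chain_sum_const /chain_sum -sumrB; apply: eq_bigr => c _.
by rewrite sumrB.
Qed.

Lemma chain_sum_nchains0 (V : nmodType) (w : T -> V) k :
  nchains T k = 0%N -> chain_sum w k = 0.
Proof.
move/card0_eq => no_chain; apply: big_pred0 => c.
by apply/negbTE; have := no_chain c; rewrite !inE => ->.
Qed.

Lemma expect_chain_dist k (f : T -> nat) :
  expect (chain_dist k) f =
  chain_sum (fun x => (f x)%:R) k / ((k.+1)%:R * (nchains T k)%:R).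
Proof.
rewrite /expect /chain_dist; under eq_bigr do rewrite mulrA.
rewrite -mulr_suml; congr (_ * _); rewrite /chain_sum.
under [RHS]eq_bigr => c /lt_sorted_uniq uniq_c do rewrite big_uniq //=.
rewrite (exchange_big_dep xpredT) //=; apply: eq_bigr => p _.
by rewrite sumr_const mulr_natr /nchains_at cardsE.
Qed.

Lemma nchainsS_gt0 k : (0 < nchains T k.+1)%N -> (0 < nchains T k)%N.
Proof.
rewrite /nchains !card_gt0 => /set0Pn[c]; rewrite inE; case/tupleP: c => x t xt_chain.
by apply/set0Pn; exists t; rewrite inE; apply: path_sorted xt_chain.
Qed.

Lemma nchains_gt0_le j k : (j <= k)%N -> (0 < nchains T k)%N -> (0 < nchains T j)%N.
Proof.
move=> /subnK <-; elim: (k - j)%N => // m IHm.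
by rewrite addSn => /nchainsS_gt0.
Qed.

Lemma nchains_gt0_le_height k : (0 < nchains T k)%N -> (k <= poset_height T)%N.
Proof.
move=> has_chain; move: (has_chain); rewrite /nchains card_gt0 => /set0Pn[c]; rewrite inE => /lt_sorted_uniq uniq_c.
have lt_k_T : (k < #|T|)%N by rewrite -(size_tuple c) -(card_uniqP uniq_c) max_card.
have := @leq_bigmax _ (fun i : 'I_#|T| => if (0 < nchains T i)%N then val i else 0%N)
  (Ordinal lt_k_T).
by rewrite /= has_chain.
Qed.

Lemma nchains_gt0 k : (0 < #|T|)%N -> (k <= poset_height T)%N -> (0 < nchains T k)%N.
Proof.
move=> T_gt0; rewrite /poset_height.
have ord_gt0 : (0 < #|'I_#|T| |)%N by rewrite card_ord.
have [i0 ->] := bigop.eq_bigmax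
  (fun i : 'I_#|T| => if (0 < nchains T i)%N then val i else 0%N) ord_gt0.
case: ifP => [has_chain le_k_i0|_]; first exact: nchains_gt0_le le_k_i0 has_chain.
rewrite leqn0 => /eqP ->; have [x _] := card_gt0P T_gt0.
by rewrite /nchains card_gt0; apply/set0Pn; exists [tuple x]; rewrite inE.
Qed.

Lemma expect_uni (f : T -> nat) : expect (@uni _ T) f = (\sum_x (f x)%:R) / #|T|%:R.
Proof. by rewrite /expect /uni mulr_suml. Qed.

Definition ddeg_mean : rat := expect (@uni _ T) (@ddeg _ T).

Definition ddeg_dev (x : T) : rat := (ddeg x)%:R - ddeg_mean.

Lemma mCDE_chain_sum : mCDE T <-> forall k, chain_sum ddeg_dev k = 0.
Proof.
have dev_sum k : chain_sum ddeg_dev k =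
    chain_sum (fun x => (ddeg x)%:R) k - ddeg_mean * ((k.+1)%:R * (nchains T k)%:R).
  by rewrite chain_sumB -natrM mulr_natr.
split=> [cde k | dev0 k le_k_h].
  have [no_chain|has_chain] := posnP (nchains T k); first exact: chain_sum_nchains0.
  rewrite dev_sum; have := cde k (nchains_gt0_le_height has_chain).
  rewrite expect_chain_dist -/ddeg_mean => <-.
  by rewrite divfK ?subrr // mulf_neq0 // pnatr_eq0 -lt0n.
have := dev0 k; rewrite dev_sum expect_chain_dist -/ddeg_mean => /eqP; rewrite subr_eq0 => /eqP ->.
have [no_chain|has_chain] := posnP (nchains T k); last first.
  by rewrite mulfK // mulf_neq0 // pnatr_eq0 -lt0n.
rewrite no_chain mulr0n !mulr0 mul0r; apply/esym.
have [T0|T_gt0] := posnP #|T|; last by have := nchains_gt0 T_gt0 le_k_h; rewrite no_chain.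
by rewrite /ddeg_mean /expect big1 // => x _; rewrite /uni T0 invr0 mulr0.
Qed.

End Chains.

Lemma covers_irr {dT : Order.disp_t} (T : finPOrderType dT) (x : T) : covers x x = false.
Proof. by rewrite /covers ltxx. Qed.

Lemma covers_convex_embedding {dT dU : Order.disp_t}
    (T : finPOrderType dT) (U : finPOrderType dU) (f : T -> U) :
  (forall a b, (f a <= f b)%O = (a <= b)%O) ->
  (forall a b z, (f b < z)%O -> (z < f a)%O -> exists c, z = f c) ->
  forall a b, covers (f a) (f b) = covers a b.
Proof.
move=> le_f convex_f a b.
have lt_f x y : (f x < f y)%O = (x < y)%O by rewrite !lt_neqAle !eq_le !le_f.
rewrite /covers lt_f; congr (_ && _); apply/forallP/forallP => between z.
  by have := between (f z); rewrite !lt_f.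
apply/negP => /andP[bz za]; have [c def_z] := convex_f a b z bz za.
by have := between c; rewrite -!lt_f -def_z bz za.
Qed.

Lemma sumrMnlr (V : nmodType) (I J : finType) (P : pred I) (Q : pred J)
    (F : I -> V) (G : J -> nat) :
  (\sum_(i | P i) F i) *+ (\sum_(j | Q j) G j) = \sum_(i | P i) \sum_(j | Q j) F i *+ G j.
Proof. by rewrite -sumrMnl; apply: eq_bigr => i _; rewrite sumrMnr. Qed.

Section Product.
Context {dP dQ : Order.disp_t} (P : finPOrderType dP) (Q : finPOrderType dQ).
Local Notation PQ := (P *p Q)%type.

Lemma sum_pair (V : nmodType) (F : PQ -> V) :
  \sum_(x : PQ) F x = \sum_p \sum_q F (p, q).
Proof. by rewrite pair_big; apply: eq_bigr => -[]. Qed.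

Lemma sum_ge_pair (V : nmodType) (z : PQ) (F : P -> Q -> V) :
  \sum_(y : PQ | (z <= y)%O) F y.1 y.2 =
  \sum_(y1 | (z.1 <= y1)%O) \sum_(y2 | (z.2 <= y2)%O) F y1 y2.
Proof. by rewrite pair_big; apply: eq_big => -[] // y1 y2; rewrite leEprod. Qed.

Lemma covers_pair1 x (a b : Q) : covers ((x, a) : PQ) (x, b) = covers a b.
Proof.
apply: (@covers_convex_embedding _ _ Q PQ (pair x)) => [a' b'|a' b' z].
  by rewrite leEprod /= lexx.
rewrite !ltEprod => /and3P[_ le_xz _] /and3P[_ le_zx _].
exists z.2; case: z le_xz le_zx => z1 z2 /= le_xz le_zx.
by have -> : z1 = x by apply/le_anti; rewrite le_zx le_xz.
Qed.

Lemma covers_pair2 (a b : P) y : covers ((a, y) : PQ) (b, y) = covers a b.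
Proof.
apply: (@covers_convex_embedding _ _ P PQ (pair^~ y)) => [a' b'|a' b' z].
  by rewrite leEprod /= lexx andbT.
rewrite !ltEprod => /and3P[_ _ le_yz] /and3P[_ _ le_zy].
exists z.1; case: z le_yz le_zy => z1 z2 /= le_yz le_zy.
by have -> : z2 = y by apply/le_anti; rewrite le_zy le_yz.
Qed.

Lemma covers_pair_coord (x y : PQ) : covers x y -> (x.1 == y.1) || (x.2 == y.2).
Proof.
case: x y => [x1 x2] [y1 y2]; rewrite /covers ltEprod /=.
case/andP=> /and3P[_ le1 le2] /forallP/(_ (x1, y2)).
rewrite !ltEprod /= le1 le2 !lexx !andbT !xpair_eqE eqxx andbT.
by rewrite negb_and !negbK eqxx /= ![_ == y1]eq_sym ![_ == y2]eq_sym.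
Qed.

Lemma ddeg_pair (x : PQ) : ddeg x = (ddeg x.1 + ddeg x.2)%N.
Proof.
case: x => x1 x2; rewrite /ddeg /=.
have -> : [set y : PQ | covers ((x1, x2) : PQ) y] =
    setX [set x1] [set b | covers x2 b] :|: setX [set a | covers x1 a] [set x2].
  apply/setP => -[a b]; rewrite !inE /=.
  have [<-|ne1] := eqVneq a x1; have [<-|ne2] := eqVneq b x2.
  - by rewrite !covers_irr.
  - by rewrite covers_pair1 andbF orbF.
  - by rewrite covers_pair2 covers_irr andbT.
  rewrite !andbF /=; apply/negbTE/negP => /covers_pair_coord /=.
  by rewrite ![_ == a]eq_sym ![_ == b]eq_sym (negbTE ne1) (negbTE ne2).
rewrite cardsU !cardsX !cards1 mul1n muln1 addnC.
suff -> : setX [set x1] [set b | covers x2 b] :&: setX [set a | covers x1 a] [set x2] = set0.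
  by rewrite cards0 subn0.
apply/setP => -[a b]; rewrite !inE /=.
by have [->|_] := eqVneq a x1; rewrite ?covers_irr /= ?andbF.
Qed.

Lemma nmultichains_from_pair n (z : PQ) :
  nmultichains_from n z = nmultichains_from n z.1 * nmultichains_from n z.2.
Proof.
elim: n z => [|n IHn] z //; rewrite !nmultichains_fromS.
under eq_bigr do rewrite IHn.
rewrite (sum_ge_pair z (fun a b => nmultichains_from n a * nmultichains_from n b)).
by rewrite mulr_suml; apply: eq_bigr => a _; rewrite mulr_sumr.
Qed.

Lemma multichain_weight_from_pair (V : nmodType) (a : P -> V) (b : Q -> V) n (z : PQ) :
  multichain_weight_from (fun y : PQ => a y.1 + b y.2) n z =
  multichain_weight_from a n z.1 *+ nmultichains_from n z.2 +
  multichain_weight_from b n z.2 *+ nmultichains_from n z.1.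
Proof.
elim: n z => [|n IHn] z; first by rewrite /= !mulr1n.
rewrite !multichain_weight_fromS nmultichains_from_pair.
under eq_bigr do rewrite IHn.
rewrite big_split /= (sum_ge_pair z (fun y1 y2 => multichain_weight_from a n y1 *+ nmultichains_from n y2)).
rewrite (sum_ge_pair z (fun y1 y2 => multichain_weight_from b n y2 *+ nmultichains_from n y1)).
rewrite [X in _ + (_ + X)]exchange_big /= -!sumrMnlr -!nmultichains_fromS.
rewrite mulrnDl mulrnA [in b z.2 *+ _]mulrC mulrnA !mulrnDl.
by rewrite addrACA.
Qed.

Lemma multichain_sum_pair (V : nmodType) (a : P -> V) (b : Q -> V) n :
  multichain_sum (fun y : PQ => a y.1 + b y.2) n =
  multichain_sum a n *+ (\sum_(q : Q) nmultichains_from n q) +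
  multichain_sum b n *+ (\sum_(p : P) nmultichains_from n p).
Proof.
rewrite /multichain_sum !sumrMnlr sum_pair [X in _ = _ + X]exchange_big -big_split /=.
apply: eq_bigr => p _; rewrite -big_split /=; apply: eq_bigr => q _.
exact: multichain_weight_from_pair.
Qed.

Lemma ddeg_dev_pair (x : PQ) : ddeg_dev x = ddeg_dev x.1 + ddeg_dev x.2.
Proof.
have /lt0n_neq0 P_neq0 : (0 < #|P|)%N by apply/card_gt0P; exists x.1.
have /lt0n_neq0 Q_neq0 : (0 < #|Q|)%N by apply/card_gt0P; exists x.2.
suff mean_pair : ddeg_mean PQ = ddeg_mean P + ddeg_mean Q.
  by rewrite /ddeg_dev mean_pair ddeg_pair natrD opprD addrACA.
rewrite /ddeg_mean !expect_uni sum_pair card_prod natrM.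
under eq_bigr do under eq_bigr do rewrite ddeg_pair natrD.
have sum_const (I : finType) (c : rat) : \sum_(i : I) c = c *+ #|I| by rewrite sumr_const.
under eq_bigr do rewrite big_split /= sum_const.
rewrite big_split /= sumrMnl sum_const -!(mulr_natr (\sum_(_ : _) _)).
by field; rewrite !pnatr_eq0 P_neq0 Q_neq0.
Qed.

End Product.

Theorem proposition2p9 (dP dQ : Order.disp_t)
  (P : finPOrderType dP) (Q : finPOrderType dQ) :
  mCDE P -> mCDE Q -> mCDE (P *p Q)%type.
Proof.
move=> /mCDE_chain_sum/multichain_sums_eq0 cdeP /mCDE_chain_sum/multichain_sums_eq0 cdeQ.
apply/mCDE_chain_sum => k.
have -> : chain_sum (@ddeg_dev _ (P *p Q)%type) k =
    chain_sum (fun y : (P *p Q)%type => ddeg_dev y.1 + ddeg_dev y.2) k.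
  by apply: eq_bigr => c _; apply: eq_bigr => x _; apply: ddeg_dev_pair.
move: k; apply/multichain_sums_eq0 => n.
by rewrite (multichain_sum_pair (@ddeg_dev _ P) (@ddeg_dev _ Q)) cdeP cdeQ !mul0rn addr0.
Qed.
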